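(* Let $\varphi$ be a skew-morphism of a finite group $A$ and let $\Pi$ be a set of primes. Then $\mathrm{Orbit}^\Pi\varphi=\{x\in A : |O_x| \text{ is a } \Pi\text{-number}\}$ is a $\varphi$-invariant subgroup of $A$ containing $\mathrm{Fix}\,\varphi$.
   Context: A skew-morphism of a finite group $A$ is a permutation $\varphi$ of the set $A$ with $\varphi(1)=1$ for which there exists a function $\pi:A\to\mathbb{Z}_n$, where $n$ is the order of $\varphi$ as a permutation, such that $\varphi(xy)=\varphi(x)\varphi^{\pi(x)}(y)$ for all $x,y\in A$. A subset $N\subseteq A$ is $\varphi$-invariant if $\varphi(N)=N$. $O_x$ denotes the orbit of $\varphi$ containing $x$, and $\mathrm{Fix}\,\varphi=\{x\in A:\varphi(x)=x\}$. For a set $\Pi$ of primes, a positive integer is a $\Pi$-number if all its prime divisors lie in $\Pi$; by convention $1$ is a $\Pi$-number. *)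

From HB Require Import structures.
From mathcomp Require Import all_boot all_fingroup.
Set Implicit Arguments. Unset Strict Implicit. Unset Printing Implicit Defensive.

Local Open Scope group_scope.

(* A skew-morphism of a finite group A (here a subgroup A of a finite group
   type gT): a permutation phi of gT supported on A (hence a permutation of
   the set A), with phi 1 = 1, and a power function pi : gT -> nat with
   phi (x * y) = phi x * (phi ^+ pi x) y for all x, y in A.  Exponents are
   taken mod the order #[phi] of phi automatically since phi ^+ #[phi] = 1. *)
Definition skew_morphism (gT : finGroupType) (A : {set gT}) (phi : {perm gT}) :=
  [/\ perm_on A phi, phi 1 = 1 &
      exists pi : gT -> nat,
        forall x y, x \in A -> y \in A -> phi (x * y) = phi x * (phi ^+ pi x) y].

Definition orb (gT : finGroupType) (phi : {perm gT}) (x : gT) : {set gT} :=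
  porbit phi x.

Definition OrbitPi (gT : finGroupType) (A : {set gT}) (phi : {perm gT})
  (Pi : nat_pred) : {set gT} :=
  [set x in A | Pi.-nat #|orb phi x|].

Definition Fixset (gT : finGroupType) (A : {set gT}) (phi : {perm gT}) : {set gT} :=
  [set x in A | phi x == x].

From HB Require Import structures.
From mathcomp Require Import all_boot all_fingroup.

Set Implicit Arguments. Unset Strict Implicit. Unset Printing Implicit Defensive.

(* If phi^n fixes x, the skew-morphism law iterated n times gives
   phi^n (x y) = x phi^e (y) for a fixed exponent e, so phi^(m n) (x y) = x y
   as soon as phi^m fixes y.  Hence |O_(xy)| divides |O_x| |O_y|, and the
   elements whose orbit length is a Pi-number are closed under products. *)

Local Open Scope group_scope.

Section PermOrbit.

Variables (T : finType) (s : {perm T}).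

Lemma iter_mod_card_porbit x i : iter i s x = iter (i %% #|porbit s x|) s x.
Proof.
rewrite {1}(divn_eq i #|porbit s x|) addnC iterD iterM.
by rewrite (iter_fix _ (iter_porbit s x)).
Qed.

Lemma card_porbit_dvd x k : iter k s x = x -> #|porbit s x| %| k.
Proof.
rewrite iter_mod_card_porbit => fix_x.
have n_gt0 : 0 < #|porbit s x| by rewrite lt0n card_porbit_neq0.
have Ut := uniq_traject_porbit s x.
rewrite /dvdn -(nth_uniq x _ _ Ut) ?size_traject ?ltn_pmod //.
by rewrite !nth_traject ?ltn_pmod // fix_x.
Qed.

Lemma card_porbit_fix x : s x = x -> #|porbit s x| = 1%N.
Proof.
move=> sx; rewrite -(cards1 x); congr #|(_ : {set T})|; apply/setP=> y.
rewrite inE; apply/porbitP/eqP=> [[i ->]|->]; first exact: permX_fix.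
by exists 0; rewrite perm1.
Qed.

End PermOrbit.

Section SkewMorphism.

Variables (gT : finGroupType) (A : {group gT}) (phi : {perm gT}) (pi : gT -> nat).
Hypotheses (phiA : perm_on A phi)
  (phiM : forall x y, x \in A -> y \in A -> phi (x * y) = phi x * (phi ^+ pi x) y).

Lemma iter_skew_closed k z : z \in A -> iter k phi z \in A.
Proof. by move=> zA; elim: k => //= k IHk; rewrite (perm_closed _ phiA). Qed.

Lemma iter_skewM x k : x \in A ->
  exists e, forall y, y \in A -> iter k phi (x * y) = iter k phi x * iter e phi y.
Proof.
move=> xA; elim: k => [|k [e IHk]]; first by exists 0.
exists (e + pi (iter k phi x)) => y yA.
by rewrite /= IHk // phiM ?iter_skew_closed // permX addnC iterD.
Qed.

Lemma iter_card_orb_skewM x : x \in A ->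
  exists e, forall j y, y \in A ->
    iter (j * #|orb phi x|) phi (x * y) = x * iter (j * e) phi y.
Proof.
move=> xA; have [e phinM] := iter_skewM #|orb phi x| xA.
exists e; elim=> [|j IHj] y yA //.
by rewrite !mulSn !iterD IHj // phinM ?iter_skew_closed // iter_porbit.
Qed.

Lemma card_orbM_dvd x y : x \in A -> y \in A ->
  #|orb phi (x * y)| %| #|orb phi y| * #|orb phi x|.
Proof.
move=> xA yA; apply: card_porbit_dvd.
have [e phixM] := iter_card_orb_skewM xA.
by rewrite phixM // mulnC iterM (iter_fix _ (iter_porbit phi y)).
Qed.

End SkewMorphism.

Lemma OrbitPi_group (gT : finGroupType) (A : {group gT}) (phi : {perm gT})
    (Pi : nat_pred) :
  skew_morphism A phi -> group_set (OrbitPi A phi Pi).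
Proof.
case=> phiA phi1 [pi phiM]; apply/group_setP; split.
  by rewrite inE group1 /orb card_porbit_fix.
move=> x y; rewrite !inE => /andP[xA Pi_x] /andP[yA Pi_y].
rewrite groupM //=; apply: pnat_dvd (card_orbM_dvd phiA phiM xA yA) _.
by rewrite pnatM Pi_x Pi_y.
Qed.

Lemma OrbitPi_perm_invariant (gT : finGroupType) (A : {group gT})
    (phi : {perm gT}) (Pi : nat_pred) :
  perm_on A phi -> phi @: OrbitPi A phi Pi = OrbitPi A phi Pi.
Proof.
move=> phiA; apply/eqP.
rewrite eqEcard card_imset ?leqnn ?andbT; last exact: perm_inj.
apply/subsetP=> _ /imsetP[x + ->]; rewrite !inE (perm_closed _ phiA) /orb.
by rewrite -[phi x]/((phi ^+ 1) x) porbit_perm.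
Qed.

Theorem mainTheorem2 (gT : finGroupType) (A : {group gT}) (phi : {perm gT})
  (Pi : nat_pred) :
  skew_morphism A phi ->
  [/\ group_set (OrbitPi A phi Pi), OrbitPi A phi Pi \subset A,
      phi @: OrbitPi A phi Pi = OrbitPi A phi Pi
    & Fixset A phi \subset OrbitPi A phi Pi].
Proof.
move=> skew; have [phiA _ _] := skew.
split; [exact: OrbitPi_group | | exact: OrbitPi_perm_invariant |].
- by apply/subsetP=> x; rewrite inE => /andP[].
- apply/subsetP=> x; rewrite !inE => /andP[-> /eqP phix].
  by rewrite /orb card_porbit_fix.
Qed.
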